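(* Let $k,m\in\mathbb{N}$ with $m<k\le 2m$ and $\gcd(2k+1,2(2m+1))=1$, and let $a>0$ satisfy $\frac{1}{4km+3k+m+1}\le\frac{a}{2k+1}\le\frac{1}{4km+k+3m+1}$. For $s=0,\dots,4m+1$ and $n=0,\dots,2k$ define $X_{sn}=\frac{s}{2(2m+1)}-\frac{n}{2k+1}$, $\Phi_{sn}=\sum_{l\in\mathbb{Z}}Q_2\big(2a(2m+1)(l+X_{sn})\big)$ with $Q_2(x)=(1-|x|)\chi_{[-1,1]}(x)$, and $A_{sn}=\Phi_{sn}-\Phi_{s,2k+1-n}$ for $n=1,\dots,k$. Then $A_{s,n}=-A_{4m+2-s,n}$ for all $s=1,\dots,2m$ and $n=1,\dots,k$. *)

From Stdlib Require Import Reals Lra Lia ZArith Arith.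
From Coquelicot Require Import Coquelicot.
Open Scope R_scope.

Definition Q2 (x : R) : R :=
  if Rle_dec (Rabs x) 1 then 1 - Rabs x else 0.

(* Sum over l in Z: sum over l >= 0 plus sum over l <= -1.
   (In our use only finitely many terms are nonzero.) *)
Definition zsum (f : Z -> R) : R :=
  Series (fun l : nat => f (Z.of_nat l)) +
  Series (fun l : nat => f (- Z.of_nat (S l))%Z).

Definition Xsn (k m s n : nat) : R :=
  INR s / (2 * (2 * INR m + 1)) - INR n / (2 * INR k + 1).

Definition Phi (a : R) (k m s n : nat) : R :=
  zsum (fun l : Z => Q2 (2 * a * (2 * INR m + 1) * (IZR l + Xsn k m s n))).

Definition Asn (a : R) (k m s n : nat) : R :=
  Phi a k m s n - Phi a k m s (2 * k + 1 - n).

(* Reflecting both indices, (s, n) -> (4m+2-s, 2k+1-n), sends X_{sn} to -X_{sn}.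
   Since Q_2 is even and l -> -l permutes Z, Phi only depends on X up to sign, so
   Phi_{4m+2-s,n} = Phi_{s,2k+1-n} and Phi_{4m+2-s,2k+1-n} = Phi_{s,n}, which is the
   claimed antisymmetry of A. *)

From Stdlib Require Import Reals Lra Lia ZArith Arith.
From Coquelicot Require Import Coquelicot.
Open Scope R_scope.

Lemma ex_series_eventually_zero (f : nat -> R) (N : nat) :
  (forall l, (N <= l)%nat -> f l = 0) -> ex_series f.
Proof.
  intros Hf. apply (ex_series_incr_n f N).
  apply ex_series_ext with (fun l => (/ 2) ^ l * 0).
  - intros l. rewrite Rmult_0_r, Hf; [reflexivity | lia].
  - apply ex_series_scal_r, ex_series_geom. rewrite Rabs_pos_eq; lra.
Qed.

Lemma zsum_ext (f g : Z -> R) : (forall l, f l = g l) -> zsum f = zsum g.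
Proof.
  intros H. unfold zsum. f_equal; apply Series_ext; intros; apply H.
Qed.

Lemma zsum_opp (f : Z -> R) :
  ex_series (fun l : nat => f (Z.of_nat l)) ->
  ex_series (fun l : nat => f (- Z.of_nat l)%Z) ->
  zsum (fun l => f (- l)%Z) = zsum f.
Proof.
  intros Hpos Hneg. unfold zsum.
  rewrite (Series_incr_1 _ Hpos), (Series_incr_1 _ Hneg).
  rewrite (Series_ext (fun l : nat => f (- - Z.of_nat (S l))%Z)
                      (fun l => f (Z.of_nat (S l)))).
  - simpl. ring.
  - intros l. rewrite Z.opp_involutive. reflexivity.
Qed.

Lemma Q2_opp (x : R) : Q2 (- x) = Q2 x.
Proof. unfold Q2. rewrite Rabs_Ropp. reflexivity. Qed.

Lemma Q2_out (x : R) : 1 < Rabs x -> Q2 x = 0.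
Proof. unfold Q2. destruct Rle_dec; lra. Qed.

Lemma Q2_affine_eventually_zero (C x : R) : 0 < C ->
  exists N : nat, forall l, (N <= l)%nat -> Q2 (C * (INR l + x)) = 0.
Proof.
  intros HC. destruct (INR_unbounded (Rabs x + / C)) as [N HN].
  exists N. intros l Hl. apply Q2_out.
  apply le_INR in Hl. pose proof (Rle_abs (- x)) as Hx. rewrite Rabs_Ropp in Hx.
  assert (Hgt : / C < INR l + x) by lra.
  apply Rmult_lt_compat_l with (r := C) in Hgt; [|exact HC].
  rewrite Rinv_r in Hgt by lra. rewrite Rabs_pos_eq; lra.
Qed.

Lemma ex_series_Q2_affine (C x : R) : 0 < C ->
  ex_series (fun l : nat => Q2 (C * (INR l + x))).
Proof.
  intros HC. destruct (Q2_affine_eventually_zero C x HC) as [N HN].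
  exact (ex_series_eventually_zero _ N HN).
Qed.

Lemma zsum_Q2_affine_opp (C x : R) : 0 < C ->
  zsum (fun l => Q2 (C * (IZR l + - x))) = zsum (fun l => Q2 (C * (IZR l + x))).
Proof.
  intros HC. rewrite <- (zsum_opp (fun l => Q2 (C * (IZR l + x)))).
  - apply zsum_ext. intros l. rewrite opp_IZR, <- Q2_opp. f_equal. ring.
  - apply ex_series_ext with (fun l : nat => Q2 (C * (INR l + x))).
    + intros l. rewrite INR_IZR_INZ. reflexivity.
    + now apply ex_series_Q2_affine.
  - apply ex_series_ext with (fun l : nat => Q2 (C * (INR l + - x))).
    + intros l. rewrite opp_IZR, <- INR_IZR_INZ, <- Q2_opp. f_equal. ring.
    + now apply ex_series_Q2_affine.
Qed.

Lemma Xsn_reflect (k m s s' n n' : nat) :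
  (s + s' = 4 * m + 2)%nat -> (n + n' = 2 * k + 1)%nat ->
  Xsn k m s' n' = - Xsn k m s n.
Proof.
  intros Hs Hn. apply (f_equal INR) in Hs, Hn.
  rewrite !plus_INR, !mult_INR in Hs, Hn. simpl in Hs, Hn.
  pose proof (pos_INR m). pose proof (pos_INR k).
  unfold Xsn. replace (INR s') with (4 * INR m + 2 - INR s) by lra.
  replace (INR n') with (2 * INR k + 1 - INR n) by lra.
  field. lra.
Qed.

Theorem lemma3p3 (k m : nat) (a : R)
  (hmk : (m < k)%nat) (hk2m : (k <= 2 * m)%nat)
  (hgcd : Nat.gcd (2 * k + 1) (2 * (2 * m + 1)) = 1%nat)
  (ha : 0 < a)
  (hlo : 1 / (4 * INR k * INR m + 3 * INR k + INR m + 1) <= a / (2 * INR k + 1))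
  (hhi : a / (2 * INR k + 1) <= 1 / (4 * INR k * INR m + INR k + 3 * INR m + 1)) :
  forall s n : nat, (1 <= s <= 2 * m)%nat -> (1 <= n <= k)%nat ->
    Asn a k m s n = - Asn a k m (4 * m + 2 - s) n.
Proof.
  intros s n hs hn.
  assert (HC : 0 < 2 * a * (2 * INR m + 1))
    by (pose proof (pos_INR m); apply Rmult_lt_0_compat; lra).
  unfold Asn, Phi.
  rewrite (Xsn_reflect k m s (4 * m + 2 - s) (2 * k + 1 - n) n) by lia.
  rewrite (Xsn_reflect k m s (4 * m + 2 - s) n (2 * k + 1 - n)) by lia.
  rewrite !zsum_Q2_affine_opp by exact HC.
  ring.
Qed.
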